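(* Let $|\psi\rangle\in\mathcal{H}$ be a normalized pure state that is UDA relative to a non-trivial neighborhood structure $\mathcal{N}=\{\mathcal{N}_k\}$, and write $\rho=|\psi\rangle\langle\psi|$. Consider the optimization problem: maximize $-\mathrm{tr}(H\rho)$ over Hermitian operators $H$ on $\mathcal{H}$ subject to (i) $H+\rho\ge0$ and (ii) $H$ is quasi-local relative to $\mathcal{N}$, i.e. $H=\sum_k H_{\mathcal{N}_k}\otimes I_{\overline{\mathcal{N}}_k}$ for some operators $H_{\mathcal{N}_k}$ on $\bigotimes_{a\in\mathcal{N}_k}\mathcal{H}_a$. Assume this problem attains its optimal value, i.e. some feasible $H$ achieves the supremum. Then there exists a Hamiltonian that is quasi-local relative to $\mathcal{N}$ and has $|\psi\rangle$ as its unique ground state.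
   Context: $\mathcal{H}=\bigotimes_{a=1}^N\mathcal{H}_a$ is finite-dimensional; $\mathcal{D}(\mathcal{H})$ is the set of density operators. A neighborhood is $\mathcal{N}_k\subsetneq\{1,\dots,N\}$ with complement $\overline{\mathcal{N}}_k$; a neighborhood structure is a finite collection of neighborhoods, non-trivial if every index lies in some neighborhood and each neighborhood intersects another. $\rho_{\mathcal{N}_k}=\mathrm{tr}_{\overline{\mathcal{N}}_k}\rho$. A state $\rho$ is UDA relative to $\mathcal{N}$ if no $\sigma\in\mathcal{D}(\mathcal{H})$, $\sigma\neq\rho$, has $\sigma_{\mathcal{N}_k}=\rho_{\mathcal{N}_k}$ for all $k$. A Hamiltonian is quasi-local relative to $\mathcal{N}$ if it is Hermitian of the form $\sum_kH_{\mathcal{N}_k}\otimes I_{\overline{\mathcal{N}}_k}$; $|\psi\rangle$ is its unique ground state if the eigenspace of the smallest eigenvalue is $\mathrm{span}\{|\psi\rangle\}$. *)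

(* Finite-dimensional quantum systems over C := R[i],
   R an arbitrary realType (all realTypes are isomorphic to the reals). *)
From HB Require Import structures.
From mathcomp Require Import all_boot all_order all_algebra.
From mathcomp Require Import complex.
From mathcomp Require Import reals.
Set Implicit Arguments. Unset Strict Implicit. Unset Printing Implicit Defensive.
Import Order.TTheory GRing.Theory Num.Theory.
Local Open Scope ring_scope.

Section Quantum.
Variable R : realType.
Local Notation C := (R[i]).
Variables (N : nat) (d : 'I_N -> nat).

(* computational basis of H = ⊗_a H_a : configurations x with x a : 'I_(d a) *)
Definition basis := {dffun forall a : 'I_N, 'I_(d a)}.

(* operators on H (matrix entries <x|A|y>) and vectors of H *)
Definition op := basis -> basis -> C.
Definition vec := basis -> C.

Definition opadd (A B : op) : op := fun x y => A x y + B x y.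
Definition opmul (A B : op) : op := fun x y => \sum_(z : basis) A x z * B z y.
Definition optr (A : op) : C := \sum_(x : basis) A x x.
Definition opapp (A : op) (v : vec) : vec := fun x => \sum_(y : basis) A x y * v y.
Definition hermitian (A : op) := forall x y, A y x = (A x y)^*.
Definition psd (A : op) :=
  hermitian A /\ forall v : vec, 0 <= \sum_(x : basis) \sum_(y : basis) (v x)^* * A x y * v y.
Definition density (s : op) := psd s /\ optr s = 1.
Definition normalized (psi : vec) := \sum_(x : basis) (psi x)^* * psi x = 1.
Definition proj (psi : vec) : op := fun x y => psi x * (psi y)^*.

Definition glue (S : {set 'I_N}) (x w : basis) : basis :=
  [ffun a => if a \in S then x a else w a].
Definition agree_on (S : {set 'I_N}) (x y : basis) := [forall a in S, x a == y a].

(* reduced operator rho_S = tr_{S^c} rho, viewed as the kernel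
   (x_S, y_S) |-> sum_{z on S^c} rho (x_S z) (y_S z); it depends only on the S-parts *)
Definition ptrace (S : {set 'I_N}) (rho : op) : op :=
  fun x y => \sum_(w : basis | agree_on S w x) rho w (glue S y w).

(* A = h ⊗ I_{S^c} for some operator h on ⊗_{a in S} H_a *)
Definition local_on (S : {set 'I_N}) (A : op) :=
  exists h : op,
    (forall x x' y y', agree_on S x x' -> agree_on S y y' -> h x y = h x' y') /\
    (forall x y, A x y = if agree_on (~: S) x y then h x y else 0).

Definition neighborhood_structure (K : nat) (nb : 'I_K -> {set 'I_N}) :=
  forall k, nb k \proper [set: 'I_N].
Definition nontrivial (K : nat) (nb : 'I_K -> {set 'I_N}) :=
  (forall a : 'I_N, exists k, a \in nb k) /\
  (forall k, exists k', k' != k /\ nb k :&: nb k' != set0).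

Definition UDA (K : nat) (nb : 'I_K -> {set 'I_N}) (rho : op) :=
  forall sigma : op, density sigma ->
    (forall k, ptrace (nb k) sigma = ptrace (nb k) rho) -> sigma = rho.

Definition quasi_local (K : nat) (nb : 'I_K -> {set 'I_N}) (H : op) :=
  hermitian H /\
  exists hs : 'I_K -> op, (forall k, local_on (nb k) (hs k)) /\
    forall x y, H x y = \sum_(k < K) hs k x y.

Definition eigenvalue (H : op) (mu : C) :=
  exists v : vec, (exists x, v x != 0) /\ opapp H v = (fun x => mu * v x).

Definition unique_ground_state (H : op) (psi : vec) :=
  exists lam : C, eigenvalue H lam /\ (forall mu, eigenvalue H mu -> lam <= mu) /\
    forall v : vec, opapp H v = (fun x => lam * v x) <-> exists c : C, v = (fun x => c * psi x).

Definition feasible (K : nat) (nb : 'I_K -> {set 'I_N}) (rho H : op) :=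
  hermitian H /\ psd (opadd H rho) /\ quasi_local nb H.

End Quantum.

From Pilot Require Import Defs.
From mathcomp Require Import all_boot all_order all_algebra.
From mathcomp Require Import complex.
From mathcomp Require Import reals.
From mathcomp Require Import ring lra.
From Stdlib Require Import FunctionalExtensionality.
Import Order.TTheory GRing.Theory Num.Theory.
Local Open Scope ring_scope.
Set Implicit Arguments. Unset Strict Implicit. Unset Printing Implicit Defensive.

(* Let rho = |psi><psi| and let H0 be optimal, so that M := H0 + rho >= 0.  Optimality
   says that <psi|L|psi> >= 0 whenever L is quasi-local and L + sM >= 0 for some real s,
   for otherwise H0 + tL would be a better feasible point for small t > 0.  So the
   functional L + sM |-> <psi|L|psi> is positive on the psd operators of the span of M
   and the quasi-local operators.  This span contains the identity, an interior point of
   the psd cone, hence the M. Riesz extension theorem (run one real coordinate at a time,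
   each new value being a supremum) extends the functional to tr(Y .) with Y >= 0.  Local
   operators are complex combinations of Hermitian quasi-local ones, so Y has the
   marginals and the trace of rho, and Y = rho by UDA.  Thus <psi|M|psi> = tr(Y M) = 0,
   whence M psi = 0 and H0 psi = -psi, while H0 v = mu v gives
   0 <= <v|M|v> = mu |v|^2 + |<psi|v>|^2 <= (mu + 1) |v|^2 by Cauchy-Schwarz, with
   equality only on span{psi}. *)

(* all_algebra also exports a [hermitian] notation, for sesquilinear forms *)
Local Notation hermitian := Defs.hermitian.

Lemma quadratic_ge0_eq0 (F : realFieldType) (q n : F) :
  0 <= q -> 0 <= n -> (forall t, 0 <= t * t * q - 2 * t * n) -> n = 0.
Proof.
move=> q0 n0 hq; pose t := n / (q + 1).
have q1 : 0 < q + 1 by rewrite ltr_wpDl.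
have tq : t * q = n - t by rewrite /t; field; rewrite gt_eqF.
have t0 : 0 <= t by rewrite /t divr_ge0 // ltW.
have := hq t; rewrite -mulrA tq => h.
have t00 : t = 0 by nra.
by move: tq; rewrite t00 mul0r subr0.
Qed.

Section Operators.
Variables (R : realType) (N : nat) (d : 'I_N -> nat).
Local Notation C := (R[i]).
Local Notation "x %:C" := (x%:C)%C (at level 1, format "x %:C").
Local Notation iC := ('i%C : C).
Local Notation Bs := (basis d).
Local Notation op := (op R d).
Local Notation vec := (vec R d).

(** * Operators and forms *)

Lemma conj_real (r : R) : (r%:C)^* = r%:C :> C.
Proof. exact: conjc_real. Qed.

Lemma conj_i : iC^* = - iC.
Proof. by apply/eqP; rewrite eq_complex /= oppr0 !eqxx. Qed.

Lemma mul_ii : iC * iC = -1.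
Proof. by rewrite -expr2 sqr_i. Qed.

Lemma ReD (x y : C) : complex.Re (x + y) = complex.Re x + complex.Re y.
Proof. by case: x; case: y. Qed.

Lemma ReZ (r : R) (x : C) : complex.Re (r%:C * x) = r * complex.Re x.
Proof. by case: x => u v /=; rewrite mul0r subr0. Qed.

Lemma ImZ (r : R) (x : C) : complex.Im (r%:C * x) = r * complex.Im x.
Proof. by case: x => u v /=; rewrite mul0r addr0. Qed.

Lemma Re_sum (I : finType) (F : I -> C) :
  complex.Re (\sum_i F i) = \sum_i complex.Re (F i).
Proof. exact: (big_morph _ ReD). Qed.

Lemma Re_conj (z : C) : complex.Re (z^*) = complex.Re z.
Proof. by case: z. Qed.

Lemma Im_conj (z : C) : complex.Im (z^*) = - complex.Im z.
Proof. by case: z. Qed.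

Lemma op_ext (A B : op) : (forall x y, A x y = B x y) -> A = B.
Proof.
by move=> eAB; apply: functional_extensionality => x;
  apply: functional_extensionality => y.
Qed.

Definition op0 : op := fun _ _ => 0.
Definition op1 : op := fun x y => (x == y)%:R.
Definition opscale (r : R) (A : op) : op := fun x y => r%:C * A x y.
Definition opadj (A : op) : op := fun x y => (A y x)^*.
Definition dotv (u w : vec) : C := \sum_x (u x)^* * w x.
Definition bform (u : vec) (A : op) (w : vec) : C := \sum_x \sum_y (u x)^* * A x y * w y.
Definition qform (v : vec) (A : op) : C := bform v A v.

Lemma opscale0 (A : op) : opscale 0 A = op0.
Proof. by apply: op_ext => x y; rewrite /opscale mul0r. Qed.

Lemma hermitian_add (A B : op) : hermitian A -> hermitian B -> hermitian (opadd A B).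
Proof. by move=> hA hB x y; rewrite /opadd hA hB rmorphD. Qed.

Lemma hermitian_scale (r : R) (A : op) : hermitian A -> hermitian (opscale r A).
Proof. by move=> hA x y; rewrite /opscale hA rmorphM /= conj_real. Qed.

Lemma hermitian1 : hermitian op1.
Proof. by move=> x y; rewrite /op1 rmorph_nat eq_sym. Qed.

Lemma dotv_conj (u w : vec) : (dotv u w)^* = dotv w u.
Proof. by rewrite rmorph_sum; apply: eq_bigr => x _; rewrite rmorphM /= conjCK mulrC. Qed.

Lemma dotv_ge0 (u : vec) : 0 <= dotv u u.
Proof. by apply: sumr_ge0 => x _; rewrite mulrC mul_conjC_ge0. Qed.

Lemma dotv_eq0 (u : vec) : dotv u u = 0 -> forall x, u x = 0.
Proof.
move=> u0 x; have u2_ge0 (y : Bs) : true -> 0 <= (u y)^* * u y.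
  by rewrite mulrC mul_conjC_ge0.
move: (psumr_eq0P u2_ge0 u0 (i := x) isT) => /eqP.
by rewrite mulf_eq0 conjC_eq0 orbb => /eqP.
Qed.

Lemma norm2_le_dotv (v : vec) x : (v x)^* * v x <= dotv v v.
Proof. by rewrite /dotv (bigD1 x) //= lerDl sumr_ge0 // => z _; rewrite mulrC mul_conjC_ge0. Qed.

Lemma normalized_neq0 (psi : vec) : normalized psi -> exists x, psi x != 0.
Proof.
move=> npsi; apply/existsP; apply: contraT; rewrite negb_exists => /forallP psi0.
have : dotv psi psi = 0.
  by rewrite /dotv big1 // => x _; move: (psi0 x); rewrite negbK => /eqP ->; rewrite mulr0.
by rewrite [dotv _ _]npsi => /eqP; rewrite oner_eq0.
Qed.

Lemma bform_conj (u w : vec) (A : op) : hermitian A -> (bform u A w)^* = bform w A u.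
Proof.
move=> hA; rewrite /bform rmorph_sum exchange_big; apply: eq_bigr => y _.
rewrite rmorph_sum; apply: eq_bigr => x _.
by rewrite !rmorphM /= conjCK (hA y x); ring.
Qed.

Lemma bform_opapp (u w : vec) (A : op) : bform u A w = dotv u (opapp A w).
Proof.
apply: eq_bigr => x _; rewrite /opapp mulr_sumr.
by apply: eq_bigr => y _; rewrite mulrA.
Qed.

Lemma qform_real (v : vec) (A : op) : hermitian A -> qform v A \is Num.real.
Proof. by move=> hA; rewrite CrealE /qform bform_conj. Qed.

Lemma qformD (v : vec) (A B : op) : qform v (opadd A B) = qform v A + qform v B.
Proof.
rewrite /qform /bform -big_split; apply: eq_bigr => x _; rewrite -big_split.
by apply: eq_bigr => y _; rewrite /opadd mulrDr mulrDl.
Qed.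

Lemma qformZ (v : vec) (c : C) (A : op) : qform v (fun x y => c * A x y) = c * qform v A.
Proof.
rewrite /qform /bform mulr_sumr; apply: eq_bigr => x _; rewrite mulr_sumr.
by apply: eq_bigr => y _; rewrite mulrCA !mulrA.
Qed.

Lemma qform_comb (v : vec) (a b : C) (A B : op) :
  qform v (fun p q => a * A p q + b * B p q) = a * qform v A + b * qform v B.
Proof. by rewrite -!qformZ -qformD. Qed.

Lemma qform0 (v : vec) : qform v op0 = 0.
Proof.
rewrite /qform /bform big1 // => x _; rewrite big1 // => y _.
by rewrite /op0 mulr0 mul0r.
Qed.

Lemma qform1 (v : vec) : qform v op1 = dotv v v.
Proof.
apply: eq_bigr => x _; rewrite (bigD1 x) //= /op1 eqxx mulr1 big1 ?addr0 // => y.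
by rewrite eq_sym => /negbTE ->; rewrite mulr0 mul0r.
Qed.

Lemma qform_proj (v psi : vec) : qform v (proj psi) = (dotv psi v)^* * dotv psi v.
Proof.
rewrite dotv_conj /qform /bform /dotv mulr_suml; apply: eq_bigr => x _.
by rewrite mulr_sumr; apply: eq_bigr => y _; rewrite /proj; ring.
Qed.

Lemma qform_sub (v w : vec) (t : R) (A : op) :
  qform (fun x => v x - t%:C * w x) A
  = qform v A - t%:C * (bform w A v + bform v A w) + (t * t)%:C * qform w A.
Proof.
have -> : bform w A v + bform v A w
    = \sum_x \sum_y ((w x)^* * A x y * v y + (v x)^* * A x y * w y).
  by rewrite /bform -big_split; apply: eq_bigr => x _; rewrite -big_split.
have sum2_lin (F G H : Bs -> Bs -> C) (a b : C) :
    \sum_x \sum_y (F x y + a * G x y + b * H x y)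
    = \sum_x \sum_y F x y + a * \sum_x \sum_y G x y + b * \sum_x \sum_y H x y.
  rewrite !mulr_sumr -!big_split; apply: eq_bigr => x _.
  by rewrite !mulr_sumr -!big_split.
rewrite /qform /bform -mulNr -sum2_lin; apply: eq_bigr => x _; apply: eq_bigr => y _.
by rewrite rmorphB rmorphM /= conj_real; ring.
Qed.

Lemma psd_of_qform (A : op) : hermitian A -> (forall v, 0 <= qform v A) -> psd A.
Proof. by split. Qed.

Lemma psd_add (A B : op) : psd A -> psd B -> psd (opadd A B).
Proof.
move=> [hA pA] [hB pB]; apply: psd_of_qform => [|v]; first exact: hermitian_add.
by rewrite qformD addr_ge0 //; [apply: pA | apply: pB].
Qed.

Lemma psd_scale (r : R) (A : op) : 0 <= r -> psd A -> psd (opscale r A).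
Proof.
move=> r0 [hA pA]; apply: psd_of_qform => [|v]; first exact: hermitian_scale.
by rewrite qformZ mulr_ge0 ?ler0c //; apply: pA.
Qed.

Lemma psd0 : psd op0.
Proof. by apply: psd_of_qform => [x y | v]; rewrite ?qform0 // /op0 rmorph0. Qed.

Lemma psd_proj (psi : vec) : psd (proj psi).
Proof.
apply: psd_of_qform => [x y | v]; first by rewrite /proj rmorphM /= conjCK mulrC.
by rewrite qform_proj mulrC mul_conjC_ge0.
Qed.

Lemma optr_mulC (A B : op) : optr (opmul A B) = optr (opmul B A).
Proof.
rewrite /optr /opmul exchange_big; apply: eq_bigr => x _.
by apply: eq_bigr => y _; rewrite mulrC.
Qed.

Lemma qform_optr (v : vec) (A : op) : qform v A = optr (opmul A (proj v)).
Proof. by apply: eq_bigr => x _; apply: eq_bigr => y _; rewrite /proj; ring. Qed.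

Lemma optr_mul1 (A : op) : optr (opmul A op1) = optr A.
Proof.
apply: eq_bigr => x _; rewrite /opmul (bigD1 x) //= /op1 eqxx mulr1 big1 ?addr0 // => y.
by move=> /negbTE ->; rewrite mulr0.
Qed.

Lemma optr_mul_comb (Z A B : op) (a b : C) :
  optr (opmul Z (fun x y => a * A x y + b * B x y))
  = a * optr (opmul Z A) + b * optr (opmul Z B).
Proof.
rewrite /optr /opmul !mulr_sumr -big_split; apply: eq_bigr => x _.
by rewrite !mulr_sumr -big_split; apply: eq_bigr => y _ /=; ring.
Qed.

Lemma opapp_add (A B : op) (v : vec) x : opapp (opadd A B) v x = opapp A v x + opapp B v x.
Proof. by rewrite /opapp -big_split; apply: eq_bigr => y _; rewrite mulrDl. Qed.

Lemma opapp_proj (psi v : vec) x : opapp (proj psi) v x = psi x * dotv psi v.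
Proof. by rewrite /opapp mulr_sumr; apply: eq_bigr => y _; rewrite /proj; ring. Qed.

Lemma opappZ (A : op) (c : C) (v : vec) x : opapp A (fun y => c * v y) x = c * opapp A v x.
Proof. by rewrite /opapp mulr_sumr; apply: eq_bigr => y _; rewrite mulrCA. Qed.

(** * Locality *)

Lemma agree_refl S (x : Bs) : agree_on S x x.
Proof. by apply/forall_inP. Qed.

Lemma agree_sym S (x y : Bs) : agree_on S x y = agree_on S y x.
Proof. by apply/forall_inP/forall_inP => h a aS; rewrite eq_sym h. Qed.

Lemma agree_trans S (x y z : Bs) : agree_on S x y -> agree_on S y z -> agree_on S x z.
Proof.
move=> /forall_inP h1 /forall_inP h2; apply/forall_inP => a aS.
by rewrite (eqP (h1 a aS)) h2.
Qed.

Lemma agree_congr S (x x' y : Bs) : agree_on S x x' -> agree_on S x y = agree_on S x' y.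
Proof.
move=> exx'; apply/idP/idP; last exact: agree_trans.
by apply: agree_trans; rewrite agree_sym.
Qed.

Lemma agree_glueE S (p x w : Bs) :
  (agree_on S p x && agree_on (~: S) p w) = (p == glue S x w).
Proof.
apply/idP/eqP => [/andP [/forall_inP hS /forall_inP hSc] | ->].
  apply/ffunP => a; rewrite ffunE; case: ifP => aS; apply/eqP.
    exact: hS.
  by apply: hSc; rewrite in_setC aS.
apply/andP; split; apply/forall_inP => a; rewrite ffunE; first by move=> ->.
by rewrite in_setC => /negbTE ->.
Qed.

Lemma agree_setC S (x y : Bs) : (agree_on S x y && agree_on (~: S) x y) = (x == y).
Proof.
apply/idP/eqP => [/andP [/forall_inP hS /forall_inP hSc] | ->]; last by rewrite !agree_refl.
apply/ffunP => a; case aS: (a \in S); apply/eqP; first exact: hS.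
by apply: hSc; rewrite in_setC aS.
Qed.

Lemma local_add S (A B : op) : local_on S A -> local_on S B -> local_on S (opadd A B).
Proof.
move=> [hA [rA eA]] [hB [rB eB]]; exists (opadd hA hB); split.
  by move=> x x' y y' ex ey; rewrite /opadd (rA x x' y y') // (rB x x' y y').
by move=> x y; rewrite /opadd eA eB; case: ifP; rewrite ?addr0.
Qed.

Lemma local_scale S (c : C) (A : op) : local_on S A -> local_on S (fun x y => c * A x y).
Proof.
move=> [hA [rA eA]]; exists (fun x y => c * hA x y); split.
  by move=> x x' y y' ex ey; rewrite (rA x x' y y').
by move=> x y; rewrite eA; case: ifP; rewrite ?mulr0.
Qed.

Lemma local_adj S (A : op) : local_on S A -> local_on S (opadj A).
Proof.
move=> [hA [rA eA]]; exists (opadj hA); split.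
  by move=> x x' y y' ex ey; rewrite /opadj (rA y y' x x').
by move=> x y; rewrite /opadj eA agree_sym; case: ifP; rewrite ?rmorph0.
Qed.

Lemma local0 S : local_on S op0.
Proof. by exists op0; split => // x y; case: ifP. Qed.

Lemma local1 S : local_on S op1.
Proof.
exists (fun x y => (agree_on S x y)%:R); split.
  move=> x x' y y' ex ey.
  by rewrite (agree_congr y ex) agree_sym (agree_congr x' ey) agree_sym.
move=> x y; rewrite /op1 -(agree_setC S).
by case: (agree_on (~: S) x y); rewrite ?andbT ?andbF.
Qed.

(* |y_S><x_S| (x) I on the complement of S *)
Definition ptrace_probe S (x y : Bs) : op :=
  fun z w => (agree_on S z y && agree_on S w x && agree_on (~: S) z w)%:R.

Lemma local_ptrace_probe S (x y : Bs) : local_on S (ptrace_probe S x y).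
Proof.
exists (fun z w => (agree_on S z y && agree_on S w x)%:R); split.
  by move=> z z' w w' ez ew; rewrite (agree_congr y ez) (agree_congr x ew).
move=> z w; rewrite /ptrace_probe.
by case: (agree_on (~: S) z w); rewrite ?andbT ?andbF.
Qed.

Lemma optr_ptrace_probe S (x y : Bs) (Z : op) :
  optr (opmul Z (ptrace_probe S x y)) = ptrace S Z x y.
Proof.
rewrite /ptrace big_mkcond; apply: eq_bigr => p _; rewrite /opmul; case: ifP => px.
  rewrite (bigD1 (glue S y p)) //= big1 ?addr0.
    by rewrite /ptrace_probe px andbT agree_glueE eqxx mulr1.
  by move=> q; rewrite /ptrace_probe px andbT agree_glueE => /negbTE ->; rewrite mulr0.
by rewrite big1 // => q _; rewrite /ptrace_probe px andbF /= mulr0.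
Qed.

Section QuasiLocal.
Variables (K : nat) (nb : 'I_K -> {set 'I_N}).

Lemma quasi_local_add (A B : op) :
  quasi_local nb A -> quasi_local nb B -> quasi_local nb (opadd A B).
Proof.
move=> [hA [hsA [lA eA]]] [hB [hsB [lB eB]]]; split; first exact: hermitian_add.
exists (fun k => opadd (hsA k) (hsB k)); split; first by move=> k; apply: local_add.
by move=> x y; rewrite /opadd eA eB big_split.
Qed.

Lemma quasi_local_scale (r : R) (A : op) : quasi_local nb A -> quasi_local nb (opscale r A).
Proof.
move=> [hA [hsA [lA eA]]]; split; first exact: hermitian_scale.
exists (fun k => opscale r (hsA k)); split; first by move=> k; apply: local_scale.
by move=> x y; rewrite /opscale eA mulr_sumr.
Qed.

Lemma quasi_local0 : quasi_local nb op0.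
Proof.
split; first by move=> x y; rewrite /op0 rmorph0.
by exists (fun=> op0); split => [k | x y]; [exact: local0 | rewrite big1].
Qed.

Lemma quasi_local_of_local k (E : op) :
  local_on (nb k) E -> hermitian E -> quasi_local nb E.
Proof.
move=> lE hE; split => //; exists (fun k' => if k' == k then E else op0); split.
  by move=> k'; case: eqP => [-> | _]; [exact: lE | exact: local0].
by move=> x y; rewrite (bigD1 k) //= eqxx big1 ?addr0 // => k' /negbTE ->.
Qed.

Lemma quasi_local1 (k : 'I_K) : quasi_local nb op1.
Proof. exact: quasi_local_of_local (local1 _) hermitian1. Qed.

Lemma optr_local_of_quasi_local (Z W : op) k (E : op) :
  (forall L, quasi_local nb L -> optr (opmul Z L) = optr (opmul W L)) ->
  local_on (nb k) E -> optr (opmul Z E) = optr (opmul W E).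
Proof.
move=> eZW lE.
pose Ere := opadd E (opadj E).
pose Eim := opadd (fun x y => iC * E x y) (opadj (fun x y => iC * E x y)).
have [hEre hEim] : hermitian Ere /\ hermitian Eim.
  by split=> x y; rewrite /Ere /Eim /opadd /opadj /= rmorphD /= conjCK addrC.
have lEi : local_on (nb k) (fun x y => iC * E x y) by apply: local_scale.
have [qlEre qlEim] : quasi_local nb Ere /\ quasi_local nb Eim.
  by split; apply: (quasi_local_of_local (k := k)) => //; apply: local_add (local_adj _).
have -> : E = fun x y => 2^-1 * Ere x y + (2^-1 * - iC) * Eim x y.
  apply: op_ext => x y; rewrite /Ere /Eim /opadd /opadj /= rmorphM /= conj_i.
  move: (E x y) ((E y x)^*) => e u.
  have e2 : (1 - iC * iC) * e + (1 + iC * iC) * u = 2 * e.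
    by rewrite mul_ii opprK addrN mul0r addr0.
  have nz2 : (2 : C) != 0 by rewrite pnatr_eq0.
  by rewrite -[LHS](mulKf nz2 e) -e2; ring.
by rewrite !optr_mul_comb !eZW.
Qed.

Lemma ptrace_eq_of_quasi_local (Y Z : op) k :
  (forall L, quasi_local nb L -> optr (opmul Y L) = optr (opmul Z L)) ->
  ptrace (nb k) Y = ptrace (nb k) Z.
Proof.
move=> eYZ; apply: op_ext => x y; rewrite -!optr_ptrace_probe.
exact: optr_local_of_quasi_local eYZ (local_ptrace_probe _ _ _).
Qed.

Lemma UDA_eq_of_quasi_local (psi : vec) (Y : op) (k : 'I_K) :
  normalized psi -> UDA nb (proj psi) -> psd Y ->
  (forall L, quasi_local nb L -> optr (opmul Y L) = optr (opmul (proj psi) L)) ->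
  Y = proj psi.
Proof.
move=> npsi uda pY eY; apply: uda => [|k']; last exact: ptrace_eq_of_quasi_local.
split => //; rewrite -optr_mul1 eY; last exact: quasi_local1 k.
by rewrite optr_mul1 -npsi; apply: eq_bigr => x _; rewrite /proj mulrC.
Qed.

End QuasiLocal.

(** * Real coordinates of Hermitian operators *)

Definition ketbra (x y : Bs) : op := fun p q => (p == x)%:R * (q == y)%:R.

Lemma sum_delta (F : Bs -> C) p : \sum_x F x * (x == p)%:R = F p.
Proof.
rewrite (bigD1 p) //= eqxx mulr1 big1 ?addr0 // => x /negbTE ->.
by rewrite mulr0.
Qed.

Lemma sum_ketbra (F : Bs -> Bs -> C) p q :
  \sum_x \sum_y F x y * ketbra x y p q = F p q.
Proof.
rewrite -[RHS](sum_delta (F ^~ q)); apply: eq_bigr => x _.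
rewrite -(sum_delta (fun y => F x y * (x == p)%:R) q); apply: eq_bigr => y _.
by rewrite /ketbra (eq_sym p) (eq_sym q); ring.
Qed.

Lemma qform_ketbra (v : vec) x y : qform v (ketbra x y) = (v x)^* * v y.
Proof.
rewrite -(sum_ketbra (fun p q => (v p)^* * v q) x y); apply: eq_bigr => p _.
apply: eq_bigr => q _; rewrite /ketbra ![_ == x]eq_sym ![_ == y]eq_sym; ring.
Qed.

(* The generator (x, y, false) is |x><y| + |y><x| and (x, y, true) is
   i|x><y| - i|y><x|; they span the Hermitian operators over the reals. *)
Definition hindex := (Bs * Bs * bool)%type.

Definition hgen (i : hindex) : op := fun p q =>
  let: (x, y, b) := i in
  if b then iC * ketbra x y p q - iC * ketbra y x p q
  else ketbra x y p q + ketbra y x p q.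

Definition hcoord (X : op) (i : hindex) : R :=
  let: (x, y, b) := i in
  if b then complex.Im (X x y) / 2 else complex.Re (X x y) / 2.

Definition hcomb (c : hindex -> R) : op := fun p q => \sum_i (c i)%:C * hgen i p q.

Lemma sum_hindex (V : nmodType) (F : hindex -> V) :
  \sum_i F i = \sum_x \sum_y (F (x, y, true) + F (x, y, false)).
Proof.
transitivity (\sum_(xy : Bs * Bs) \sum_b F (xy, b)).
  by rewrite (pair_bigA _ (fun xy b => F (xy, b))); apply: eq_bigr => -[].
transitivity (\sum_x \sum_y \sum_b F (x, y, b)).
  by rewrite (pair_bigA _ (fun x y => \sum_b F (x, y, b))); apply: eq_bigr => -[].
by apply: eq_bigr => x _; apply: eq_bigr => y _; rewrite big_bool.
Qed.

Lemma hcoordK (X : op) : hermitian X -> hcomb (hcoord X) = X.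
Proof.
move=> hX; apply: op_ext => p q; rewrite /hcomb sum_hindex /=.
set re := fun x y => (complex.Re (X x y) / 2)%:C.
set im := fun x y => (complex.Im (X x y) / 2)%:C.
transitivity (\sum_x \sum_y ((re x y + iC * im x y) * ketbra x y p q)
            + \sum_x \sum_y ((re y x - iC * im y x) * ketbra x y p q)).
  rewrite [X in _ + X]exchange_big /= -big_split; apply: eq_bigr => x _.
  by rewrite -big_split; apply: eq_bigr => y _ /=; rewrite /re /im; ring.
rewrite !sum_ketbra /re /im (hX p q) Re_conj Im_conj [RHS]complexE.
by rewrite !rmorphM /= !fmorphV /= rmorphN /= rmorph_nat; field.
Qed.

Lemma hcoord_scale (r : R) (X : op) i : hcoord (opscale r X) i = r * hcoord X i.
Proof. by case: i => [[x y] []]; rewrite /hcoord /opscale ?ReZ ?ImZ mulrA. Qed.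

Lemma hcomb0 : hcomb (fun=> 0) = op0.
Proof. by apply: op_ext => p q; rewrite /hcomb big1 // => i _; rewrite rmorph0 mul0r. Qed.

Lemma hermitian_hgen (i : hindex) : hermitian (hgen i).
Proof.
case: i => [[x y] []] p q /=; rewrite /ketbra;
  rewrite ?rmorphB ?rmorphD !rmorphM /= !rmorph_nat ?conj_i; ring.
Qed.

Lemma qform_hgen (v : vec) x y b : qform v (hgen (x, y, b)) =
  if b then iC * ((v x)^* * v y) - iC * ((v y)^* * v x)
  else (v x)^* * v y + (v y)^* * v x.
Proof.
case: b.
  have -> : hgen (x, y, true) = fun p q => iC * ketbra x y p q + - iC * ketbra y x p q.
    by apply: op_ext => p q; rewrite mulNr.
  by rewrite qform_comb !qform_ketbra mulNr.
have -> : hgen (x, y, false) = fun p q => 1 * ketbra x y p q + 1 * ketbra y x p q.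
  by apply: op_ext => p q; rewrite !mul1r.
by rewrite qform_comb !qform_ketbra !mul1r.
Qed.

Lemma conj_comb_ge0 (a b c : C) : c^* * c = 1 ->
  0 <= a^* * a + b^* * b + (c * (a^* * b) + c^* * (b^* * a)).
Proof.
move=> cc; rewrite -[b^* * b]mul1r -cc.
have -> : a^* * a + c^* * c * (b^* * b) + (c * (a^* * b) + c^* * (b^* * a))
        = (a + c * b) * (a + c * b)^* by rewrite rmorphD rmorphM /=; ring.
exact: mul_conjC_ge0.
Qed.

Lemma psd_hgen_bound (i : hindex) (e : R) :
  e * e = 1 -> psd (opadd (opscale 2 op1) (opscale e (hgen i))).
Proof.
move=> ee; apply: psd_of_qform => [|v].
  by apply: hermitian_add; apply: hermitian_scale; [exact: hermitian1 | exact: hermitian_hgen].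
rewrite qformD !qformZ qform1 rmorph_nat.
case: i => [[x y] b]; set Q := qform v _.
have sx := norm2_le_dotv v x; have sy := norm2_le_dotv v y.
set a := v x in sx Q *; set b' := v y in sy Q *.
suff key : 0 <= a^* * a + b'^* * b' + e%:C * Q.
  have -> : 2%:R * dotv v v + e%:C * Q = (dotv v v - a^* * a) + (dotv v v - b'^* * b')
                                        + (a^* * a + b'^* * b' + e%:C * Q) by ring.
  by rewrite addr_ge0 // addr_ge0 // subr_ge0.
rewrite {}/Q qform_hgen -/a -/b'; case: b.
- have ci : (e%:C * iC)^* * (e%:C * iC) = 1.
    by rewrite rmorphM /= conj_real conj_i mulrACA -rmorphM ee mulNr mul_ii opprK mulr1.
  have := conj_comb_ge0 a b' ci; rewrite rmorphM /= conj_real conj_i => h.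
  by rewrite (_ : e%:C * (_ - _) = e%:C * iC * (a^* * b') + e%:C * - iC * (b'^* * a)) //; ring.
- have ce : (e%:C)^* * e%:C = 1 by rewrite conj_real -rmorphM ee.
  by have := conj_comb_ge0 a b' ce; rewrite conj_real mulrDr.
Qed.

Definition hdual_half (a : hindex -> R) : op := fun x y =>
  Complex (a (x, y, false) / 4) (- a (x, y, true) / 4).

Definition hdual (a : hindex -> R) : op :=
  fun p q => hdual_half a q p + (hdual_half a p q)^*.

Lemma hermitian_hdual (a : hindex -> R) : hermitian (hdual a).
Proof. by move=> p q; rewrite /hdual rmorphD /= conjCK addrC. Qed.

Lemma optr_hdual (a : hindex -> R) (X : op) : hermitian X ->
  optr (opmul (hdual a) X) = (\sum_i hcoord X i * a i)%:C.
Proof.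
move=> hX; set T := \sum_p \sum_q hdual_half a p q * X p q.
have -> : optr (opmul (hdual a) X) = T + T^*.
  rewrite /T rmorph_sum /= exchange_big -big_split /=; apply: eq_bigr => p _.
  rewrite rmorph_sum -big_split /=; apply: eq_bigr => q _.
  by rewrite rmorphM /= (hX q p) conjCK mulrDl.
have ReT : 2 * complex.Re T = \sum_i hcoord X i * a i.
  rewrite /T Re_sum sum_hindex mulr_sumr; apply: eq_bigr => x _.
  rewrite Re_sum mulr_sumr; apply: eq_bigr => y _.
  by rewrite /hdual_half /hcoord; case: (X x y) => u v /=; field.
by rewrite addcJ -ReT rmorphM rmorph_nat.
Qed.

Lemma sum_hcoordN (a : hindex -> R) (X : op) :
  \sum_i hcoord (opscale (-1) X) i * a i = - \sum_i hcoord X i * a i.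
Proof. by rewrite -sumrN; apply: eq_bigr => i _; rewrite hcoord_scale mulN1r mulNr. Qed.

(** * The M. Riesz extension *)

Section Riesz.
Variables (W : op -> Prop) (M : op) (f : op -> R).
Hypothesis W_add : forall L L', W L -> W L' -> W (opadd L L').
Hypothesis W_scale : forall r L, W L -> W (opscale r L).
Hypothesis W1 : W op1.
Hypothesis f_add : forall L L', f (opadd L L') = f L + f L'.
Hypothesis f_scale : forall r L, f (opscale r L) = r * f L.
Hypothesis f_ge0 : forall L s, W L -> psd (opadd L (opscale s M)) -> 0 <= f L.

Lemma W0 : W op0.
Proof. by rewrite -(opscale0 op1); apply: W_scale. Qed.

Lemma f0 : f op0 = 0.
Proof. by rewrite -(opscale0 op1) f_scale mul0r. Qed.

(* riesz_val a is the candidate extension L + sM + hcomb c |-> f L + sum_i c i * a i of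
   f (extended by 0 on M); positive_on S a asks for its positivity when c is supported
   on S. *)
Definition riesz_op (L : op) (s : R) (c : hindex -> R) : op :=
  opadd (opadd L (opscale s M)) (hcomb c).

Definition riesz_val (a : hindex -> R) (L : op) (c : hindex -> R) : R :=
  f L + \sum_i c i * a i.

Definition supported (S : {set hindex}) (c : hindex -> R) := forall i, i \notin S -> c i = 0.

Definition positive_on (S : {set hindex}) (a : hindex -> R) :=
  forall L s c, W L -> supported S c -> psd (riesz_op L s c) -> 0 <= riesz_val a L c.

Lemma riesz_opD L s c L' s' c' :
  riesz_op (opadd L L') (s + s') (fun i => c i + c' i)
  = opadd (riesz_op L s c) (riesz_op L' s' c').
Proof.
apply: op_ext => p q; rewrite /riesz_op /opadd /opscale /hcomb rmorphD /=.
rewrite (eq_bigr (fun i => (c i)%:C * hgen i p q + (c' i)%:C * hgen i p q)).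
  by rewrite big_split /=; ring.
by move=> i _; rewrite rmorphD mulrDl.
Qed.

Lemma riesz_valD a L c L' c' :
  riesz_val a (opadd L L') (fun i => c i + c' i) = riesz_val a L c + riesz_val a L' c'.
Proof.
rewrite /riesz_val f_add (eq_bigr (fun i => c i * a i + c' i * a i)).
  by rewrite big_split /=; ring.
by move=> i _; rewrite mulrDl.
Qed.

Lemma riesz_opZ r L s c :
  riesz_op (opscale r L) (r * s) (fun i => r * c i) = opscale r (riesz_op L s c).
Proof.
apply: op_ext => p q.
rewrite /riesz_op /opadd /opscale /hcomb !mulrDr mulr_sumr rmorphM /=.
rewrite (eq_bigr (fun i => r%:C * ((c i)%:C * hgen i p q))); first by ring.
by move=> i _; rewrite rmorphM /= mulrA.
Qed.

Lemma riesz_valZ a r L c : riesz_val a (opscale r L) (fun i => r * c i) = r * riesz_val a L c.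
Proof.
rewrite /riesz_val f_scale mulrDr mulr_sumr.
by congr (_ + _); apply: eq_bigr => i _; rewrite mulrA.
Qed.

Lemma riesz_op0 L : riesz_op L 0 (fun=> 0) = L.
Proof.
rewrite /riesz_op hcomb0; apply: op_ext => p q.
by rewrite /opadd /opscale /op0 mul0r !addr0.
Qed.

Lemma riesz_op_split x L s c : riesz_op L s c =
  opadd (riesz_op L s (fun i => if i == x then 0 else c i)) (opscale (c x) (hgen x)).
Proof.
apply: op_ext => p q; rewrite /riesz_op /opadd /opscale /hcomb (bigD1 x) //=.
rewrite [in RHS](bigD1 x) //= eqxx rmorph0 mul0r add0r.
rewrite [in RHS](eq_bigr (fun i => (c i)%:C * hgen i p q)); first by ring.
by move=> i /negbTE ->.
Qed.

Lemma riesz_val_split x t a L c :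
  riesz_val (fun i => if i == x then t else a i) L c =
  riesz_val a L (fun i => if i == x then 0 else c i) + c x * t.
Proof.
rewrite /riesz_val (bigD1 x) //= [in RHS](bigD1 x) //= !eqxx mul0r add0r.
rewrite (eq_bigr (fun i => c i * a i)); last by move=> i /negbTE ->.
rewrite [in RHS](eq_bigr (fun i => c i * a i)); last by move=> i /negbTE ->.
by ring.
Qed.

Lemma positive_on0 a : positive_on set0 a.
Proof.
move=> L s c WL c0 pL; have {}c0 : c = fun=> 0.
  by apply: functional_extensionality => i; rewrite c0 ?in_set0.
rewrite c0 /riesz_val big1 ?addr0; last by move=> i _; rewrite mul0r.
apply: (f_ge0 (s := s)) => //; move: pL; rewrite c0 /riesz_op hcomb0.
by congr psd; apply: op_ext => p q; rewrite /opadd /op0 addr0.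
Qed.

(* Witnesses with coefficient +1 on hgen x bound the new value a' x from below, those
   with coefficient -1 from above; both exist since 2 - hgen x and 2 + hgen x are psd. *)
Lemma riesz_gap (S : {set hindex}) a x : positive_on S a -> exists t,
  (forall L s c, W L -> supported S c -> psd (opadd (riesz_op L s c) (hgen x)) ->
     - riesz_val a L c <= t) /\
  (forall L s c, W L -> supported S c ->
     psd (opadd (riesz_op L s c) (opscale (-1) (hgen x))) -> t <= riesz_val a L c).
Proof.
move=> posS.
pose A : classical_sets.set R := fun t => exists L s c, [/\ W L, supported S c,
  psd (opadd (riesz_op L s c) (hgen x)) & t = - riesz_val a L c].
have A_ub L s c : W L -> supported S c ->
    psd (opadd (riesz_op L s c) (opscale (-1) (hgen x))) ->
    classical_sets.ubound A (riesz_val a L c).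
  move=> WL Sc pL _ [L' [s' [c' [WL' Sc' pL' ->]]]].
  rewrite -subr_ge0 opprK addrC -riesz_valD.
  apply: (posS _ (s' + s)) (W_add WL' WL) _ _; first by move=> i iS; rewrite Sc ?Sc' ?addr0.
  rewrite riesz_opD; move: (psd_add pL' pL); congr psd.
  by apply: op_ext => p q; rewrite /opadd /opscale rmorphN1; ring.
have bound2 e : e * e = 1 ->
    psd (opadd (riesz_op (opscale 2 op1) 0 (fun=> 0)) (opscale e (hgen x))).
  by move=> ee; rewrite riesz_op0; exact: psd_hgen_bound.
have supA : classical_sets.has_sup A.
  split.
    exists (- riesz_val a (opscale 2 op1) (fun=> 0)), (opscale 2 op1), 0, (fun=> 0).
    split => //; first exact: W_scale.
    move: (bound2 1 (mulr1 1)); congr psd.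
    by apply: op_ext => p q; rewrite /opadd /opscale rmorph1 mul1r.
  exists (riesz_val a (opscale 2 op1) (fun=> 0)).
  by apply: A_ub (W_scale _ W1) _ (bound2 _ _) => //; rewrite mulN1r opprK.
exists (sup A); split => [L s c WL Sc pL | L s c WL Sc pL].
  by apply: (sup_upper_bound supA); exists L, s, c.
exact: ge_sup (proj1 supA) (A_ub _ _ _ WL Sc pL).
Qed.

Lemma positive_on_extend (S : {set hindex}) a x :
  x \notin S -> positive_on S a -> exists a', positive_on (x |: S) a'.
Proof.
move=> xS posS; have [t [t_lb t_ub]] := riesz_gap x posS.
exists (fun i => if i == x then t else a i) => L s c WL Sc pL.
pose c' i := if i == x then 0 else c i.
have Sc' : supported S c'.
  move=> i iS; rewrite /c'; case: eqP => // /eqP ix.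
  by apply: Sc; rewrite in_setU1 negb_or ix.
rewrite (riesz_op_split x) -/c' in pL; rewrite riesz_val_split -/c'.
have scaled r : 0 <= r -> psd (opadd (riesz_op (opscale r L) (r * s) (fun i => r * c' i))
                                      (opscale (r * c x) (hgen x))).
  move=> r0; rewrite riesz_opZ; move: (psd_scale r0 pL); congr psd.
  by apply: op_ext => p q; rewrite /opadd /opscale rmorphM /=; ring.
have Sc'Z r : supported S (fun i => r * c' i) by move=> i iS; rewrite Sc' ?mulr0.
case: (ltrgtP (c x) 0) => cx.
- pose r := - (c x)^-1.
  have rcx : r * c x = -1 by rewrite /r mulNr mulVf // lt_eqF.
  have r0 : 0 <= r by rewrite /r oppr_ge0 invr_le0 ltW.
  have := t_ub (opscale r L) (r * s) _ (W_scale r WL) (Sc'Z r).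
  rewrite -rcx riesz_valZ => /(_ (scaled r r0)) /(ler_wnM2l (ltW cx)).
  by rewrite mulrA [c x * r]mulrC rcx mulN1r -lerBlDr sub0r lerNl.
- pose r := (c x)^-1.
  have rcx : r * c x = 1 by rewrite /r mulVf // gt_eqF.
  have r0 : 0 <= r by rewrite /r invr_ge0 ltW.
  have p1 : psd (opadd (riesz_op (opscale r L) (r * s) (fun i => r * c' i)) (hgen x)).
    move: (scaled r r0); rewrite rcx; congr psd.
    by apply: op_ext => p q; rewrite /opadd /opscale rmorph1 mul1r.
  move: (t_lb _ _ _ (W_scale r WL) (Sc'Z r) p1).
  rewrite riesz_valZ => /(ler_wpM2l (ltW cx)).
  by rewrite mulrN mulrA [c x * r]mulrC rcx mul1r -lerBlDr sub0r lerNl.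
- rewrite cx mul0r addr0; apply: (posS _ s) WL Sc' _.
  have -> : riesz_op L s c' = opadd (riesz_op L s c') (opscale (c x) (hgen x)).
    by rewrite cx opscale0; apply: op_ext => p q; rewrite /opadd /op0 addr0.
  exact: pL.
Qed.

Lemma exists_positive_onT : exists a, positive_on setT a.
Proof.
suff ext : forall n (S : {set hindex}), (#|S| <= n)%N -> exists a, positive_on S a.
  exact: ext _ setT (leqnn _).
elim=> [|n IH] S cardS.
  by exists (fun=> 0); move: cardS; rewrite leqn0 cards_eq0 => /eqP ->; apply: positive_on0.
have [->|[x xS]] := set_0Vmem S; first by exists (fun=> 0); apply: positive_on0.
have [|a posa] := IH (S :\ x).
  by rewrite -ltnS (leq_trans _ cardS) // [in X in (_ < X)%N](cardsD1 x S) xS.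
by rewrite -(setD1K xS); apply: positive_on_extend posa; rewrite setD11.
Qed.

Section PositiveFunctional.
Variable a : hindex -> R.
Hypothesis posa : positive_on setT a.

Lemma positive_onT_hermitian L s X : W L -> hermitian X ->
  psd (opadd (opadd L (opscale s M)) X) -> 0 <= f L + \sum_i hcoord X i * a i.
Proof.
move=> WL hX pX; apply: (@posa L s (hcoord X) WL); first by move=> i; rewrite in_setT.
by rewrite /riesz_op hcoordK.
Qed.

Lemma positive_onT_cancel L s X : W L -> hermitian X ->
  opadd (opadd L (opscale s M)) X = op0 -> 0 <= f L + \sum_i hcoord X i * a i.
Proof.
by move=> WL hX eX; apply: (@positive_onT_hermitian L s X WL hX); rewrite eX; exact: psd0.
Qed.

Lemma psd_hdual : psd (hdual a).
Proof.
apply: psd_of_qform => [|v]; first exact: hermitian_hdual.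
have [hv _] := psd_proj v.
rewrite qform_optr optr_hdual // ler0c.
have := @positive_onT_hermitian op0 0 (proj v) W0 hv; rewrite f0 add0r; apply.
have -> : opadd (opadd op0 (opscale 0 M)) (proj v) = proj v.
  by apply: op_ext => p q; rewrite /opadd /opscale /op0 rmorph0; ring.
exact: psd_proj.
Qed.

Lemma optr_hdual_W L : W L -> hermitian L -> optr (opmul (hdual a) L) = (f L)%:C.
Proof.
move=> WL hL; rewrite optr_hdual //; congr (_%:C).
have e1 : opadd (opadd L (opscale 0 M)) (opscale (-1) L) = op0.
  by apply: op_ext => p q; rewrite /opadd /opscale /op0 rmorph0 rmorphN1; ring.
have e2 : opadd (opadd (opscale (-1) L) (opscale 0 M)) L = op0.
  by apply: op_ext => p q; rewrite /opadd /opscale /op0 rmorph0 rmorphN1; ring.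
have := positive_onT_cancel WL (hermitian_scale (-1) hL) e1.
have := positive_onT_cancel (W_scale (-1) WL) hL e2.
by rewrite sum_hcoordN f_scale mulN1r; lra.
Qed.

Lemma optr_hdual_M : hermitian M -> optr (opmul (hdual a) M) = 0.
Proof.
move=> hM; rewrite optr_hdual //; suff -> : \sum_i hcoord M i * a i = 0 by rewrite rmorph0.
have e1 : opadd (opadd op0 (opscale 1 M)) (opscale (-1) M) = op0.
  by apply: op_ext => p q; rewrite /opadd /opscale /op0 rmorph1 rmorphN1; ring.
have e2 : opadd (opadd op0 (opscale (-1) M)) M = op0.
  by apply: op_ext => p q; rewrite /opadd /opscale /op0 rmorphN1; ring.
have := positive_onT_cancel W0 (hermitian_scale (-1) hM) e1.
have := positive_onT_cancel W0 hM e2.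
by rewrite sum_hcoordN f0; lra.
Qed.

End PositiveFunctional.

Lemma riesz_extension : hermitian M ->
  exists Y, [/\ psd Y, forall L, W L -> hermitian L -> optr (opmul Y L) = (f L)%:C
              & optr (opmul Y M) = 0].
Proof.
move=> hM; have [a posa] := exists_positive_onT.
by exists (hdual a); split; [exact: psd_hdual | exact: optr_hdual_W | exact: optr_hdual_M].
Qed.

End Riesz.

(** * Ground states *)

Lemma psd_kernel (A : op) (psi : vec) :
  psd A -> qform psi A = 0 -> forall x, opapp A psi x = 0.
Proof.
move=> [hA pA] qA0; set w := opapp A psi.
have e1 : bform w A psi = dotv w w by rewrite bform_opapp.
have e2 : bform psi A w = dotv w w by rewrite -bform_conj // e1 dotv_conj.
have /complex_realP [n en] := ger0_real (dotv_ge0 w).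
have /complex_realP [q eq] := ger0_real (pA w).
have n0 : 0 <= n by rewrite -ler0c -en dotv_ge0.
have q0 : 0 <= q by rewrite -ler0c -eq pA.
suff n00 : n = 0 by apply: dotv_eq0; rewrite en n00.
apply: (quadratic_ge0_eq0 q0 n0) => t; rewrite -ler0c.
have := pA (fun x => psi x - t%:C * w x).
rewrite -[X in 0 <= X -> _]/(qform _ A) qform_sub qA0 e1 e2 en [qform w A]eq.
by rewrite !(rmorphB, rmorphM) /= rmorph_nat; congr (_ <= _); ring.
Qed.

Lemma dotv_sub_proj (psi v : vec) : normalized psi ->
  dotv (fun x => v x - dotv psi v * psi x) (fun x => v x - dotv psi v * psi x)
  = dotv v v - qform v (proj psi).
Proof.
move=> npsi; have expand (z : C) :
    dotv (fun x => v x - z * psi x) (fun x => v x - z * psi x)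
    = dotv v v - z * dotv v psi - z^* * dotv psi v + z^* * z * dotv psi psi.
  rewrite /dotv !mulr_sumr -!sumrN -!big_split; apply: eq_bigr => x _ /=.
  by rewrite rmorphB rmorphM /=; ring.
by rewrite expand qform_proj -(dotv_conj psi v) [dotv psi psi]npsi; ring.
Qed.

Lemma qform_proj_le (psi v : vec) : normalized psi -> qform v (proj psi) <= dotv v v.
Proof. by move=> npsi; rewrite -subr_ge0 -dotv_sub_proj // dotv_ge0. Qed.

Lemma unique_ground_state_of_kernel (H : op) (psi : vec) :
  normalized psi -> psd (opadd H (proj psi)) -> qform psi (opadd H (proj psi)) = 0 ->
  unique_ground_state H psi.
Proof.
move=> npsi pM qM0.
have Hpsi : opapp H psi = (fun x => -1 * psi x).
  apply: functional_extensionality => x; move: (psd_kernel pM qM0 x).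
  rewrite opapp_add opapp_proj [dotv psi psi]npsi mulr1 mulN1r.
  by move=> /eqP; rewrite addr_eq0 => /eqP.
have lower v mu : opapp H v = (fun x => mu * v x) ->
    0 <= mu * dotv v v + qform v (proj psi).
  move=> Hv; have -> : mu * dotv v v = qform v H.
    by rewrite /qform bform_opapp Hv /dotv mulr_sumr; apply: eq_bigr => x _; ring.
  by rewrite -qformD; case: pM => _; apply.
exists (-1); split; [|split].
- by exists psi; split; [exact: normalized_neq0 | exact: Hpsi].
- move=> mu [v [[x vx] Hv]].
  have nv : 0 < dotv v v.
    by rewrite lt_def dotv_ge0 andbT; apply: contra vx => /eqP/dotv_eq0 ->.
  have : 0 <= (mu + 1) * dotv v v.
    rewrite (_ : _ * _ = mu * dotv v v + qform v (proj psi)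
                         + (dotv v v - qform v (proj psi))); last by ring.
    by rewrite addr_ge0 ?lower // subr_ge0 qform_proj_le.
  by rewrite pmulr_lge0 // => h; rewrite -subr_ge0 opprK.
- move=> v; split => [Hv | [c ->]]; last first.
    by apply: functional_extensionality => x; rewrite opappZ Hpsi mulrCA.
  exists (dotv psi v); apply: functional_extensionality => x.
  have eP : qform v (proj psi) = dotv v v.
    apply/eqP; rewrite eq_le qform_proj_le //= -subr_ge0 addrC.
    by move: (lower v (-1) Hv); rewrite mulN1r.
  move: (dotv_sub_proj v npsi); rewrite eP subrr => /dotv_eq0/(_ x)/eqP.
  by rewrite subr_eq0 => /eqP.
Qed.

Lemma unique_ground_state_trivial (psi : vec) :
  (forall x y : Bs, x = y) -> normalized psi -> unique_ground_state op0 psi.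
Proof.
move=> single npsi; have [x0 psix0] := normalized_neq0 npsi.
have app0 v : opapp op0 v = (fun x => 0 * v x).
  apply: functional_extensionality => x.
  by rewrite mul0r /opapp big1 // => y _; rewrite mul0r.
exists 0; split; [|split].
- by exists psi; split; [exists x0 | exact: app0].
- move=> mu [v [[x vx] Hv]]; have := congr1 (fun g => g x) Hv.
  rewrite app0 /= mul0r => /esym/eqP.
  by rewrite mulf_eq0 (negbTE vx) orbF => /eqP ->.
- move=> v; split => [_ | _]; last exact: app0.
  exists (v x0 / psi x0); apply: functional_extensionality => x.
  by rewrite (single x x0) mulfVK.
Qed.

Section Optimality.
Variables (K : nat) (nb : 'I_K -> {set 'I_N}) (psi : vec) (H0 : op).
Hypothesis feasH0 : feasible nb (proj psi) H0.
Hypothesis optH0 : forall H, feasible nb (proj psi) H ->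
  - optr (opmul H (proj psi)) <= - optr (opmul H0 (proj psi)).

Lemma optimal_dual_ge0 (L : op) (s : R) :
  quasi_local nb L -> psd (opadd L (opscale s (opadd H0 (proj psi)))) ->
  0 <= complex.Re (qform psi L).
Proof.
move=> qlL pL; case: feasH0 => hH0 [pM qlH0].
pose t := (`|s| + 1)^-1.
have t0 : 0 < t by rewrite invr_gt0 ltr_wpDl.
have ts : 0 <= 1 - t * s.
  rewrite subr_ge0 -(mulVf (x := `|s| + 1)) ?gt_eqF ?ltr_wpDl // ler_wpM2l ?ltW //.
  by have := ler_norm s; lra.
have feasH : feasible nb (proj psi) (opadd H0 (opscale t L)).
  split; first exact: hermitian_add (hermitian_scale _ (proj1 qlL)).
  split; last exact: quasi_local_add (quasi_local_scale _ qlL).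
  move: (psd_add (psd_scale (ltW t0) pL) (psd_scale ts pM)); congr psd.
  by apply: op_ext => p q; rewrite /opadd /opscale rmorphB rmorph1 rmorphM /=; ring.
move: (optH0 feasH); rewrite -!qform_optr qformD lerN2 lerDl qformZ pmulr_rge0 ?ltcR //.
by rewrite lecE => /andP [_].
Qed.

End Optimality.

End Operators.

Unset Implicit Arguments.

Theorem theoremV2 (R : realType) (N : nat) (d : 'I_N -> nat)
  (K : nat) (nb : 'I_K -> {set 'I_N}) (psi : vec R d) :
  neighborhood_structure nb -> nontrivial nb ->
  normalized psi ->
  UDA nb (proj psi) ->
  (exists H0 : op R d, feasible nb (proj psi) H0 /\
     forall H : op R d, feasible nb (proj psi) H ->
       - optr (opmul H (proj psi)) <= - optr (opmul H0 (proj psi))) ->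
  exists H : op R d, quasi_local nb H /\ unique_ground_state H psi.
Proof.
move=> _ [cover _] npsi uda [H0 [feasH0 optH0]].
case: K nb cover uda feasH0 optH0 => [|K] nb cover uda feasH0 optH0.
  (* no neighborhood can cover a site, so N = 0 and the space is one-dimensional *)
  exists (@op0 R N d); split; first exact: quasi_local0.
  apply: unique_ground_state_trivial npsi => x y.
  by apply/ffunP => a; case: (cover a) => -[].
have [_ [pM qlH0]] := feasH0.
have fD L L' : complex.Re (qform psi (opadd L L'))
    = complex.Re (qform psi L) + complex.Re (qform psi L') by rewrite qformD ReD.
have fZ r L : complex.Re (qform psi (opscale r L)) = r * complex.Re (qform psi L).
  by rewrite qformZ ReZ.
have [Y [pY eYL eYM]] := riesz_extension (quasi_local_add (nb := nb))
  (quasi_local_scale (nb := nb)) (quasi_local1 _ _ nb ord0) fD fZ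
  (optimal_dual_ge0 feasH0 optH0) (proj1 pM).
have Yrho : Y = proj psi.
  apply: (UDA_eq_of_quasi_local ord0 npsi uda pY) => L qlL; have hL := proj1 qlL.
  by rewrite eYL // optr_mulC -qform_optr RRe_real // qform_real.
exists H0; split => //; apply: unique_ground_state_of_kernel npsi pM _.
by rewrite -eYM Yrho qform_optr optr_mulC.
Qed.
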